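(* Let $G\in\mathfrak D_4$ and let $\Upsilon\subseteq G$ be a subgraph isomorphic to the Mycielski–Grötzsch graph with vertices labelled $a_j,b_j$ ($j\in\mathbb Z/5\mathbb Z$), $c$. Then at least one of $a_1,a_2,a_3$ is reliable; that is, there exists $i\in\{1,2,3\}$ such that no vertex of $G$ is adjacent to all three of $a_{i-1},a_{i+1},b_i$.
   Context: $\mathfrak D_4$ is the class of (finite) maximal triangle-free graphs satisfying property $\mathscr{D}_4$ (for every $m\in\{1,2,3,4\}$ and every sequence $x_1,\dots,x_{3m}$ of not necessarily distinct vertices there is a vertex $y$ with $|\{i: x_iy\in E(G)\}|\ge m+1$). Maximal triangle-free: no triangle, and adding any new edge creates a triangle. Mycielski–Grötzsch graph: vertices $a_j,b_j$ ($j\in\mathbb Z/5\mathbb Z$), $c$; edges all pairs $a_jc$, $a_jb_{j\pm2}$, $b_jb_{j+2}$. *)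

From mathcomp Require Import all_boot all_order all_algebra.
Set Implicit Arguments. Unset Strict Implicit. Unset Printing Implicit Defensive.

Definition simple_graph (T : finType) (e : rel T) : Prop :=
  symmetric e /\ irreflexive e.

Definition triangle_free (T : finType) (e : rel T) : Prop :=
  forall x y z : T, e x y -> e y z -> e x z -> False.

(* triangle-free, and adding any new edge xy (x <> y, xy not an edge)
   creates a triangle, i.e. x and y have a common neighbour *)
Definition maximal_triangle_free (T : finType) (e : rel T) : Prop :=
  triangle_free e /\
  forall x y : T, x != y -> ~~ e x y -> exists z : T, e x z && e z y.

Definition property_D4 (T : finType) (e : rel T) : Prop :=
  forall m : nat, 1 <= m <= 4 ->
  forall x : 'I_(3 * m) -> T,
  exists y : T, m < #|[set i : 'I_(3 * m) | e (x i) y]|.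

Definition in_frakD4 (T : finType) (e : rel T) : Prop :=
  simple_graph e /\ maximal_triangle_free e /\ property_D4 e.

(* Upsilon: an (not necessarily induced) subgraph of G isomorphic to the
   Mycielski-Groetzsch graph, given by the images of a_j, b_j (j in Z/5Z)
   and c: these 11 vertices are pairwise distinct and the edges a_j c,
   a_j b_{j+-2}, b_j b_{j+2} are edges of G. *)
Definition MG_subgraph (T : finType) (e : rel T)
  (a b : 'Z_5 -> T) (c : T) : Prop :=
  [/\ injective a, injective b,
      (forall i j, a i != b j),
      (forall j, c != a j /\ c != b j) &
      forall j : 'Z_5,
        [/\ e (a j) c, e (a j) (b (j + 2)%R), e (a j) (b (j - 2)%R)
          & e (b j) (b (j + 2)%R)]].

Definition reliable (T : finType) (e : rel T) (a b : 'Z_5 -> T) (i : 'Z_5) : Prop :=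
  ~ exists v : T, [&& e v (a (i - 1)%R), e v (a (i + 1)%R) & e v (b i)].

From mathcomp Require Import all_boot all_order all_algebra.

Set Implicit Arguments.
Unset Strict Implicit.
Unset Printing Implicit Defensive.

(* If a_1, a_2, a_3 are all unreliable, with witnesses v_1, v_2, v_3, look at
   the configuration formed by Upsilon and the v_i.  In a triangle-free graph
   the neighbours of a vertex are independent, so D_4 cannot hold for 3m
   configuration vertices whose independent subsets have at most m elements.
   Among a_0, a_2, a_4, b_1, b_2, b_3, v_1, v_2, v_3 the independent 4-sets
   are five explicit sets Q, hence D_4 (m = 3) gives a vertex y adjacent to
   all of some Q.  With y added, each Q comes with twelve vertices whose
   independent subsets have at most four elements, contradicting D_4 (m = 4).
   The independence bounds are finite computations. *)

Definition selects (L : seq nat) (p : bitseq) (u : nat) : bool :=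
  nth false p (index u L).

Fixpoint bitseqs (n : nat) : seq bitseq :=
  if n is n'.+1 then [seq x :: p | x <- [:: true; false], p <- bitseqs n']
  else [:: [::]].

Lemma mem_bitseqs (p : bitseq) : p \in bitseqs (size p).
Proof.
elim: p => [|x p IHp] //=.
by rewrite mem_cat cats0; case: x; apply/orP; [left | right]; apply/mapP; exists p.
Qed.

(* Every subset of [L] containing no hyperedge of [F] has at most [k] elements;
   subsets of [L] are bit sequences indexed like [L]. *)
Definition indep_le (F : seq (seq nat)) (L : seq nat) (k : nat) : bool :=
  all (fun p => all (fun Q => ~~ all (selects L p) Q) F ==> (count id p <= k))
      (bitseqs (size L)).

Definition pair_edges (E : seq (nat * nat)) : seq (seq nat) :=
  [seq [:: uv.1; uv.2] | uv <- E].

Lemma card_set_nth (T : finType) (x0 : T) (s : seq T) (P : pred T) n :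
  n = size s -> #|[set i : 'I_n | P (nth x0 s i)]| = count P s.
Proof.
move=> ->; rewrite cardsE cardE /enum_mem size_filter -enumT.
rewrite -(count_map val (fun i => P (nth x0 s i))) val_enum_ord.
by rewrite -count_map -/(mkseq _ _) mkseq_nth.
Qed.

Lemma property_D4_count (T : finType) (e : rel T) m (s : seq T) :
  property_D4 e -> 1 <= m <= 4 -> size s = 3 * m ->
  exists y, m < count (e^~ y) s.
Proof.
case: s => [|x0 s] D4 m14 size_s.
  by case: m m14 size_s => [|m] //; rewrite mulnS.
have [y Hy] := D4 m m14 (fun i => nth x0 (x0 :: s) i).
by exists y; rewrite -(card_set_nth x0 _ (esym size_s)).
Qed.

Section LabelledVertices.

Variables (T : finType) (e : rel T) (w : nat -> T).

Lemma count_nbr_le (F : seq (seq nat)) L k z :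
  indep_le F L k -> (forall Q, Q \in F -> ~~ all (fun u => e (w u) z) Q) ->
  count (fun u => e (w u) z) L <= k.
Proof.
pose p := [seq e (w u) z | u <- L].
move=> /allP /(_ p) indepL noQ; rewrite -[X in X <= k](count_map _ id).
have selectsP u : selects L p u -> e (w u) z.
  rewrite /selects; case: (ltnP (index u L) (size L)) => [uL | Lu].
    by rewrite (nth_map u) // nth_index // -index_mem.
  by rewrite nth_default // size_map.
apply: (implyP (indepL _)).
  by rewrite -(size_map (fun u => e (w u) z)) mem_bitseqs.
apply/allP => Q QF; apply: contra (noQ Q QF); exact: sub_all.
Qed.

Lemma D4_common_nbr m L (E : seq (nat * nat)) F :
  triangle_free e -> property_D4 e -> 1 <= m <= 4 -> size L = 3 * m ->
  {in E, forall uv, e (w uv.1) (w uv.2)} -> indep_le (pair_edges E ++ F) L m ->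
  exists2 Q, Q \in F & exists z, all (fun u => e (w u) z) Q.
Proof.
move=> tf D4 m14 size_L Ew indepL.
have [z] := property_D4_count D4 m14 (etrans (size_map w L) size_L).
rewrite count_map => lt_m_count.
have [/hasP [Q QF Qz] | noQ] := boolP (has (all (fun u => e (w u) z)) F).
  by exists Q => //; exists z.
suff: count (fun u => e (w u) z) L <= m by rewrite leqNgt lt_m_count.
apply: (count_nbr_le indepL) => Q; rewrite mem_cat => /orP [/mapP [uv uvE ->] | QF].
  by apply/negP => /and3P [uz vz _]; exact: tf _ _ _ (Ew _ uvE) vz uz.
by apply: contra noQ => Qz; apply/hasP; exists Q.
Qed.

End LabelledVertices.

Definition a_ (x : 'Z_5) : nat := x.
Definition b_ (x : 'Z_5) : nat := 5 + x.
Definition c_ : nat := 10.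
Definition v_ (i : 'Z_5) : nat := 10 + i.
Definition y_ : nat := 14.

(* [enum 'Z_5] does not reduce under [vm_compute]. *)
Definition Z5 : seq 'Z_5 := [seq inZp j | j <- iota 0 5].

Definition mg_edges : seq (nat * nat) :=
  flatten [seq [:: (a_ x, c_); (a_ x, b_ (x + 2)%R); (a_ x, b_ (x - 2)%R);
                   (b_ x, b_ (x + 2)%R)] | x <- Z5].

Definition witness_edges : seq (nat * nat) :=
  flatten [seq [:: (v_ i, a_ (i - 1)%R); (v_ i, a_ (i + 1)%R); (v_ i, b_ i)]
          | i <- [:: 1%R; 2%R; 3%R]].

Definition config_edges : seq (nat * nat) := mg_edges ++ witness_edges.

Definition nine_vertices : seq nat :=
  [:: a_ 0; a_ 2; a_ 4; b_ 1; b_ 2; b_ 3; v_ 1; v_ 2; v_ 3]%R.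

(* Each independent 4-set [Q] of [nine_vertices], paired with 12 vertices of
   the configuration extended by a vertex [y_] adjacent to [Q]. *)
Definition quad_certificates : seq (seq nat * seq nat) :=
  [:: ([:: a_ 0; a_ 2; a_ 4; v_ 2]%R,
       [:: a_ 0; a_ 1; a_ 2; a_ 3; b_ 0; b_ 1; b_ 2; b_ 3; b_ 4; c_; v_ 2; y_]%R);
      ([:: a_ 0; a_ 2; b_ 1; v_ 2]%R,
       [:: a_ 0; a_ 1; a_ 2; a_ 3; b_ 0; b_ 1; b_ 2; b_ 3; b_ 4; c_; v_ 2; y_]%R);
      ([:: a_ 0; b_ 1; v_ 2; v_ 3]%R,
       [:: a_ 0; a_ 1; a_ 2; a_ 4; b_ 1; b_ 2; b_ 3; b_ 4; c_; v_ 2; v_ 3; y_]%R);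
      ([:: a_ 2; a_ 4; b_ 3; v_ 2]%R,
       [:: a_ 0; a_ 2; a_ 3; a_ 4; b_ 0; b_ 1; b_ 2; b_ 3; c_; v_ 1; v_ 2; y_]%R);
      ([:: a_ 4; b_ 3; v_ 1; v_ 2]%R,
       [:: a_ 0; a_ 2; a_ 3; a_ 4; b_ 0; b_ 1; b_ 2; b_ 3; c_; v_ 1; v_ 2; y_]%R)].

Lemma nine_vertices_indep :
  indep_le (pair_edges config_edges ++ map fst quad_certificates) nine_vertices 3.
Proof. by vm_compute. Qed.

Lemma quad_certificates_indep :
  all (fun QL => [&& all (fun u => u < y_) QL.1, size QL.2 == 12 &
         indep_le (pair_edges (config_edges ++ [seq (u, y_) | u <- QL.1])) QL.2 4])
      quad_certificates.
Proof. by vm_compute. Qed.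

Definition config_vertex (T : Type) (a b v : 'Z_5 -> T) (c y : T) (n : nat) : T :=
  if n < 5 then a (inZp n) else if n < 10 then b (inZp (n - 5))
  else if n == 10 then c else if n < 14 then v (inZp (n - 10)) else y.

Definition unreliable_witness (T : finType) (e : rel T) (a b : 'Z_5 -> T)
    (i : 'Z_5) (v : T) : bool :=
  [&& e v (a (i - 1)%R), e v (a (i + 1)%R) & e v (b i)].

Section Configuration.

Variables (T : finType) (e : rel T) (a b v : 'Z_5 -> T) (c : T).
Local Notation w := (config_vertex a b v c).

Lemma config_vertex_a y x : w y (a_ x) = a x.
Proof. by rewrite /config_vertex /a_ (ltn_ord x) valZpK. Qed.

Lemma config_vertex_b y x : w y (b_ x) = b x.
Proof.
by rewrite /config_vertex /b_ ltnNge leq_addr ltn_add2l (ltn_ord x) addKn valZpK.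
Qed.

Lemma config_vertex_c y : w y c_ = c.
Proof. by []. Qed.

Lemma config_vertex_v y i : i \in [:: 1%R; 2%R; 3%R] -> w y (v_ i) = v i.
Proof.
move=> i123; have [i0 i4] : 0 < i /\ i < 4.
  by move: i123; rewrite !inE => /or3P [] /eqP ->.
rewrite /config_vertex /v_ ltnNge (leq_trans _ (leq_addr _ _)) // ltnNge leq_addr.
by rewrite /= -[X in _ == X]addn0 eqn_add2l eqn0Ngt i0 ltn_add2l i4 addKn valZpK.
Qed.

Lemma config_vertex_y y : w y y_ = y.
Proof. by []. Qed.

Lemma config_vertex_change_y y y' n : n < y_ -> w y n = w y' n.
Proof. by rewrite /config_vertex /y_ => ->. Qed.

Lemma config_edges_mapped y :
  MG_subgraph e a b c ->
  {in [:: 1%R; 2%R; 3%R], forall i, unreliable_witness e a b i (v i)} ->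
  {in config_edges, forall uv, e (w y uv.1) (w y uv.2)}.
Proof.
move=> [_ _ _ _ MGe] vw uv; rewrite mem_cat => /orP [] /flatten_mapP [x xs].
  rewrite !inE => /or4P [] /eqP ->;
    rewrite ?config_vertex_a ?config_vertex_b ?config_vertex_c; by case: (MGe x).
rewrite !inE => /or3P [] /eqP ->;
  rewrite config_vertex_v ?config_vertex_a ?config_vertex_b //;
  by case/and3P: (vw x xs).
Qed.

Lemma no_unreliable_witnesses :
  triangle_free e -> property_D4 e -> MG_subgraph e a b c ->
  {in [:: 1%R; 2%R; 3%R], forall i, unreliable_witness e a b i (v i)} -> False.
Proof.
move=> tf D4 MG vw; have Ew y := config_edges_mapped y MG vw.
have [_ /mapP [[Q L] QL ->] [y /allP Qy]] :=
  D4_common_nbr (m := 3) (L := nine_vertices) tf D4 isT erefl (Ew c)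
                nine_vertices_indep.
have /and3P [/allP Q_lt_y /eqP size_L indepL] := allP quad_certificates_indep _ QL.
have Ey : {in config_edges ++ [seq (u, y_) | u <- Q],
            forall uv, e (w y uv.1) (w y uv.2)}.
  move=> uv; rewrite mem_cat => /orP [/Ew // | /mapP [u uQ ->] /=].
  by rewrite config_vertex_y (config_vertex_change_y _ c) ?Qy ?Q_lt_y.
rewrite -[pair_edges _]cats0 in indepL.
by have [] := D4_common_nbr (m := 4) tf D4 isT size_L Ey indepL.
Qed.

End Configuration.

Theorem mainTheorem15 (T : finType) (e : rel T) (a b : 'Z_5 -> T) (c : T) :
  in_frakD4 e -> MG_subgraph e a b c ->
  exists i : 'Z_5, i \in [:: 1%R; 2%R; 3%R] /\ reliable e a b i.
Proof.
move=> [_ [[tf _] D4]] MG.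
have [i /andP [i123 /existsPn no_v] | unrel] :=
  pickP (fun i => (i \in [:: 1%R; 2%R; 3%R]) && ~~ [exists v, unreliable_witness e a b i v]).
  by exists i; split => // -[v vi]; move: (no_v v); rewrite /unreliable_witness vi.
pose v i := odflt c [pick x | unreliable_witness e a b i x].
exfalso; apply: (no_unreliable_witnesses (v := v) tf D4 MG) => i i123.
rewrite /v; case: pickP => [x // | none].
by move: (unrel i); rewrite i123 /= negbK => /existsP [x]; rewrite none.
Qed.
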